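(* Let $0<q<1$. Then \[ q^{2}(1+q)^{2}+q^{4}+\sum_{n=1}^{\infty}\frac{(1/2|q^{2})_{n}^{2}}{([n+1]_{q^{2}}!)^{2}}\,q^{4n+4}=\frac{(1+q)^{4}}{\pi_{q}}\,q^{9/4}. \]
   Context: Let $0<q<1$ and write $q^{x}=e^{x\log q}$. $[z]_{q^2}=\frac{1-q^{2z}}{1-q^2}$; $[0]_{q^2}!=1$, $[n]_{q^2}!=\prod_{k=1}^n[k]_{q^2}$; $(1/2|q^2)_n=\prod_{k=0}^{n-1}[1/2+k]_{q^2}$. With $(z;q)_\infty=\prod_{k\ge0}(1-zq^k)$, $\pi_q=(1-q^2)q^{1/4}\frac{(q^2;q^2)_\infty^2}{(q;q^2)_\infty^2}$. *)

From Stdlib Require Import Reals Lra ClassicalEpsilon.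
Open Scope R_scope.

Definition qpow (q x : R) : R := Rpower q x.

Definition qnum2 (q z : R) : R := (1 - qpow q (2 * z)) / (1 - q ^ 2).

Fixpoint qfact2 (q : R) (n : nat) : R :=
  match n with
  | O => 1
  | S m => qfact2 q m * qnum2 q (INR (S m))
  end.

Fixpoint qhalf_poch (q : R) (n : nat) : R :=
  match n with
  | O => 1
  | S m => qhalf_poch q m * qnum2 q (1/2 + INR m)
  end.

Fixpoint qpoch_partial (z b : R) (n : nat) : R :=
  match n with
  | O => 1
  | S m => qpoch_partial z b m * (1 - z * b ^ m)
  end.

(* (z; b)_infty : the limit of the partial products (chosen by epsilon;
   the limit exists for |b| < 1) *)
Definition qpoch_inf (z b : R) : R :=
  epsilon (inhabits 0) (fun l => Un_cv (fun n => qpoch_partial z b n) l).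

Definition pi_q (q : R) : R :=
  (1 - q ^ 2) * qpow q (1/4) * (qpoch_inf (q ^ 2) (q ^ 2)) ^ 2
    / (qpoch_inf q (q ^ 2)) ^ 2.

Definition term8 (q : R) (n : nat) : R :=
  (qhalf_poch q n) ^ 2 / (qfact2 q (S n)) ^ 2 * q ^ (4 * n + 4).

(* With p = q^2, the left side is q^2 (1+q)^2 F(p), where F(c) is Heine's series
   2phi1(1/q, 1/q; c; p; c p) (the terms of index 0 and 1 account for q^2 (1+q)^2 + q^4).
   Up to a telescoping difference, the terms of F satisfy the contiguous relation
   F(c) = (1 - q c)^2 / ((1 - c) (1 - c p)) F(c p); iterating it from c = p to
   c = p^(K+1) and using F(c) -> 1 as c -> 0 gives the q-Gauss value
   F(p) = (1 - p) (q; p)_oo^2 / ((1 - q)^2 (p; p)_oo^2) = (1 + q)^2 q^(1/4) / pi_q. *)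

From Stdlib Require Import Reals Lra Lia ClassicalEpsilon.
From Coquelicot Require Import Coquelicot.
Open Scope R_scope.

Lemma pow_bounds_01 x n : 0 <= x <= 1 -> 0 <= x ^ n <= 1.
Proof.
  intro Hx. split; [now apply pow_le|].
  rewrite <- (pow1 n). apply pow_incr; lra.
Qed.

Lemma qpoch_partial_shift z b n :
  qpoch_partial z b (S n) = (1 - z) * qpoch_partial (z * b) b n.
Proof.
  induction n as [|n IH]; simpl; [ring|].
  simpl in IH. rewrite IH. ring.
Qed.

Lemma qpoch_partial_bounds z b n :
  0 <= z < 1 -> 0 <= b <= 1 -> 0 < qpoch_partial z b n <= 1.
Proof.
  intros Hz Hb. induction n as [|n IH]; simpl; [lra|].
  pose proof (pow_bounds_01 b n Hb).
  assert (0 <= z * b ^ n < 1) by nra. nra.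
Qed.

Lemma qpoch_partial_antimono z z' b n :
  0 <= z <= z' -> z' < 1 -> 0 <= b <= 1 ->
  qpoch_partial z' b n <= qpoch_partial z b n.
Proof.
  intros Hz Hz' Hb. induction n as [|n IH]; simpl; [lra|].
  pose proof (pow_bounds_01 b n Hb).
  pose proof (qpoch_partial_bounds z' b n ltac:(lra) Hb).
  apply Rmult_le_compat; nra.
Qed.

Lemma exp_le_compat x y : x <= y -> exp x <= exp y.
Proof.
  intros [Hlt|Heq]; [left; now apply exp_increasing | now subst].
Qed.

Lemma exp_neg_le_one_minus x : 0 <= x < 1 -> exp (- (x / (1 - x))) <= 1 - x.
Proof.
  intro Hx.
  assert (Hexp : 1 + x / (1 - x) <= exp (x / (1 - x))).
  { destruct (Req_dec (x / (1 - x)) 0) as [E|E].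
    - rewrite E, exp_0. lra.
    - left. now apply exp_ineq1. }
  replace (1 + x / (1 - x)) with (/ (1 - x)) in Hexp by (field; lra).
  apply Rinv_le_contravar in Hexp; [|apply Rinv_0_lt_compat; lra].
  now rewrite Rinv_inv, <- exp_Ropp in Hexp.
Qed.

(* Each factor satisfies [1 - x >= exp (-x/(1-x))] with [x/(1-x) <= z b^k / (1-z)] for
   [x = z b^k]; the exponents add up to a geometric sum. *)
Lemma qpoch_partial_exp_lower z b n : 0 < z < 1 -> 0 < b < 1 ->
  exp (- (z / ((1 - z) * (1 - b)) * (1 - b ^ n))) <= qpoch_partial z b n.
Proof.
  intros Hz Hb. induction n as [|n IH]; simpl.
  - replace (- (z / ((1 - z) * (1 - b)) * (1 - 1))) with 0 by ring. rewrite exp_0. lra.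
  - pose proof (pow_bounds_01 b n ltac:(lra)) as Hbn.
    assert (Hbn0 : 0 < b ^ n) by (apply pow_lt; lra).
    set (x := z * b ^ n).
    assert (Hx : 0 < x < 1) by (unfold x; nra).
    assert (Hstep : x / (1 - x) <= z / ((1 - z) * (1 - b)) * (b ^ n - b * b ^ n)).
    { unfold x. apply Rmult_le_reg_r with ((1 - z * b ^ n) * ((1 - z) * (1 - b))).
      { apply Rmult_lt_0_compat; nra. }
      field_simplify; try nra.
      assert (0 <= z * b ^ n * (1 - b) * z * (1 - b ^ n)) by (repeat apply Rmult_le_pos; lra).
      nra. }
    apply Rle_trans with
      (exp (- (z / ((1 - z) * (1 - b)) * (1 - b ^ n))) * exp (- (x / (1 - x)))).
    + rewrite <- exp_plus. apply exp_le_compat. lra.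
    + pose proof (qpoch_partial_bounds z b n ltac:(lra) ltac:(lra)).
      apply Rmult_le_compat; try (left; apply exp_pos); [exact IH|].
      apply exp_neg_le_one_minus. lra.
Qed.

Lemma qpoch_partial_cv z b : 0 < z < 1 -> 0 < b < 1 ->
  exists l, Un_cv (qpoch_partial z b) l /\ 0 < l.
Proof.
  intros Hz Hb.
  assert (Hdec : Un_decreasing (qpoch_partial z b)).
  { intro n. simpl. pose proof (qpoch_partial_bounds z b n ltac:(lra) ltac:(lra)).
    assert (0 < b ^ n) by (apply pow_lt; lra).
    assert (0 < qpoch_partial z b n * (z * b ^ n)) by (apply Rmult_lt_0_compat; nra).
    nra. }
  assert (Hlb : has_lb (qpoch_partial z b)).
  { exists 0. intros x [n ->]. unfold opp_seq.
    pose proof (qpoch_partial_bounds z b n ltac:(lra) ltac:(lra)). lra. }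
  destruct (decreasing_cv _ Hdec Hlb) as [l Hl].
  exists l. split; [exact Hl|].
  set (C := z / ((1 - z) * (1 - b))).
  assert (HC : 0 <= C) by (unfold C; apply Rmult_le_pos; [lra | left; apply Rinv_0_lt_compat; nra]).
  assert (Hle : forall n, exp (- C) <= qpoch_partial z b n).
  { intro n. eapply Rle_trans; [|apply qpoch_partial_exp_lower; auto].
    fold C. apply exp_le_compat.
    assert (0 < b ^ n) by (apply pow_lt; lra). nra. }
  pose proof (is_lim_seq_le (fun _ => exp (- C)) _ _ _ Hle
    (is_lim_seq_const _) (proj2 (is_lim_seq_Reals _ _) Hl)) as Hlim.
  simpl in Hlim. pose proof (exp_pos (- C)). lra.
Qed.

Lemma qpoch_inf_spec z b : 0 < z < 1 -> 0 < b < 1 ->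
  is_lim_seq (qpoch_partial z b) (qpoch_inf z b) /\ 0 < qpoch_inf z b.
Proof.
  intros Hz Hb. destruct (qpoch_partial_cv z b Hz Hb) as [l [Hl Hpos]].
  assert (Heq : qpoch_inf z b = l).
  { apply (UL_sequence (qpoch_partial z b)); [|exact Hl].
    apply (epsilon_spec (inhabits 0) (fun l => Un_cv (fun n => qpoch_partial z b n) l)).
    now exists l. }
  rewrite Heq. split; [now apply is_lim_seq_Reals | exact Hpos].
Qed.

Lemma is_series_telescoping (H : nat -> R) (l : R) :
  is_lim_seq H l -> is_series (fun m => H (S m) - H m) (l - H O).
Proof.
  intro HH.
  assert (Hsum : forall n, sum_n (fun m => H (S m) - H m) n = H (S n) - H O).
  { induction n as [|n IH]; [now rewrite sum_O | rewrite sum_Sn, IH; simpl; unfold plus; simpl; ring]. }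
  enough (Hlim : is_lim_seq (sum_n (fun m => H (S m) - H m)) (l - H O)) by exact Hlim.
  apply (is_lim_seq_ext _ _ _ (fun n => eq_sym (Hsum n))).
  apply is_lim_seq_minus'; [apply (is_lim_seq_incr_1 H) | apply is_lim_seq_const]; auto.
Qed.

Lemma Series_nonneg (a : nat -> R) :
  ex_series a -> (forall n, 0 <= a n) -> 0 <= Series a.
Proof.
  intros Ha Hpos. rewrite <- (Rmult_0_l (Series a)), <- Series_scal_l.
  apply Series_le; [|exact Ha].
  intro n. rewrite Rmult_0_l. split; [lra | apply Hpos].
Qed.

Section HeineSum.

Variable s : R.
Hypothesis Hs : 0 < s < 1.

(* Heine's series [2phi1(a, a; c; p; c p)] with [p = s^2], [a = 1/s]: its argument
   [c p = c / a^2] is the point where the q-Gauss sum applies. *)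
Definition heine_term (c : R) (m : nat) : R :=
  qpoch_partial (/ s) (s ^ 2) m ^ 2
    / (qpoch_partial (s ^ 2) (s ^ 2) m * qpoch_partial c (s ^ 2) m) * (c * s ^ 2) ^ m.

Definition heine_ratio (c : R) : R := (1 - s * c) ^ 2 / ((1 - c) * (1 - c * s ^ 2)).

Definition heine_defect (c : R) (m : nat) : R :=
  - (1 - (s ^ 2) ^ m) * heine_term c m / (1 - c * s ^ 2).

Lemma sq_s_bounds : 0 < s ^ 2 < 1.
Proof. split; nra. Qed.

Lemma heine_term_contiguous c m : 0 < c < 1 ->
  heine_term c m
  = heine_ratio c * heine_term (c * s ^ 2) m + (heine_defect c (S m) - heine_defect c m).
Proof.
  intro Hc. pose proof sq_s_bounds as Hs2.
  unfold heine_ratio, heine_defect, heine_term.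
  pose proof (pow_bounds_01 (s ^ 2) m ltac:(lra)) as Hx.
  assert (Hx0 : 0 < (s ^ 2) ^ m) by (apply pow_lt; lra).
  assert (Hnext : qpoch_partial (c * s ^ 2) (s ^ 2) m
               = qpoch_partial c (s ^ 2) m * (1 - c * (s ^ 2) ^ m) / (1 - c)).
  { pose proof (qpoch_partial_shift c (s ^ 2) m) as Hsh.
    change (qpoch_partial c (s ^ 2) (S m))
      with (qpoch_partial c (s ^ 2) m * (1 - c * (s ^ 2) ^ m)) in Hsh.
    rewrite Hsh. field. lra. }
  rewrite Hnext.
  change (qpoch_partial ?z (s ^ 2) (S m)) with (qpoch_partial z (s ^ 2) m * (1 - z * (s ^ 2) ^ m)).
  change ((?x) ^ S m) with (x * x ^ m).
  rewrite (Rpow_mult_distr (c * s ^ 2) (s ^ 2) m).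
  pose proof (qpoch_partial_bounds c (s ^ 2) m ltac:(lra) ltac:(lra)).
  pose proof (qpoch_partial_bounds (s ^ 2) (s ^ 2) m ltac:(lra) ltac:(lra)).
  set (x := (s ^ 2) ^ m) in *.
  assert (0 < 1 - c * x) by nra.
  assert (0 < 1 - s ^ 2 * x) by nra.
  assert (0 < 1 - c * s ^ 2) by nra.
  field. repeat split; lra.
Qed.

Lemma abs_qpoch_partial_inv_le c m : 0 < c <= s ^ 2 ->
  Rabs (qpoch_partial (/ s) (s ^ 2) m) <= / s * qpoch_partial c (s ^ 2) m.
Proof.
  intro Hc. pose proof sq_s_bounds as Hs2.
  assert (His : 1 < / s) by (rewrite <- Rinv_1; apply Rinv_lt_contravar; lra).
  destruct m as [|m].
  - simpl. rewrite Rabs_R1. lra.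
  - rewrite !qpoch_partial_shift.
    replace (/ s * s ^ 2) with s by (field; lra).
    pose proof (qpoch_partial_bounds s (s ^ 2) m ltac:(lra) ltac:(lra)).
    assert (Hmono : qpoch_partial s (s ^ 2) m <= qpoch_partial (c * s ^ 2) (s ^ 2) m)
      by (apply qpoch_partial_antimono; nra).
    rewrite Rabs_mult, Rabs_left1 by lra. rewrite Rabs_right by lra.
    assert (Hfac : - (1 - / s) <= / s * (1 - c)).
    { apply Rmult_le_reg_l with s; [lra|]. field_simplify; nra. }
    rewrite <- Rmult_assoc. apply Rmult_le_compat; lra.
Qed.

Lemma heine_term_bounds c m : 0 < c <= s ^ 2 ->
  0 <= heine_term c m <= / s ^ 2 * (c * s ^ 2) ^ m.
Proof.
  intro Hc. pose proof sq_s_bounds as Hs2.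
  pose proof (abs_qpoch_partial_inv_le c m Hc) as Bc.
  pose proof (abs_qpoch_partial_inv_le (s ^ 2) m ltac:(lra)) as Bq.
  pose proof (qpoch_partial_bounds c (s ^ 2) m ltac:(lra) ltac:(lra)).
  pose proof (qpoch_partial_bounds (s ^ 2) (s ^ 2) m ltac:(lra) ltac:(lra)).
  assert (Hw : 0 <= (c * s ^ 2) ^ m) by (apply pow_le; nra).
  unfold heine_term.
  set (X := qpoch_partial (/ s) (s ^ 2) m) in *.
  set (Y := qpoch_partial (s ^ 2) (s ^ 2) m) in *.
  set (Z := qpoch_partial c (s ^ 2) m) in *.
  assert (HX2 : X ^ 2 <= (/ s * Y) * (/ s * Z)).
  { rewrite <- (pow2_abs X). simpl. rewrite Rmult_1_r.
    apply Rmult_le_compat; try apply Rabs_pos; lra. }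
  split.
  - apply Rmult_le_pos; [|exact Hw].
    apply Rmult_le_pos; [apply pow2_ge_0 | left; apply Rinv_0_lt_compat; nra].
  - apply Rmult_le_compat_r; [exact Hw|].
    apply Rmult_le_reg_r with (Y * Z); [nra|].
    unfold Rdiv. rewrite Rmult_assoc, Rinv_l, Rmult_1_r by nra.
    replace (/ s ^ 2 * (Y * Z)) with (/ s * Y * (/ s * Z)) by (field; lra). exact HX2.
Qed.

Lemma pow_s2_S_bounds K : 0 < (s ^ 2) ^ S K <= s ^ 2.
Proof.
  pose proof sq_s_bounds. change ((s ^ 2) ^ S K) with (s ^ 2 * (s ^ 2) ^ K).
  pose proof (pow_bounds_01 (s ^ 2) K ltac:(lra)).
  assert (0 < (s ^ 2) ^ K) by (apply pow_lt; lra). split; nra.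
Qed.

Lemma heine_base_bounds c : 0 < c <= s ^ 2 -> 0 < c * s ^ 2 < s ^ 2.
Proof. intro Hc. pose proof sq_s_bounds. split; nra. Qed.

Lemma ex_series_heine_term c : 0 < c <= s ^ 2 -> ex_series (heine_term c).
Proof.
  intro Hc. pose proof sq_s_bounds. pose proof (heine_base_bounds c Hc).
  apply (@ex_series_le R_AbsRing R_CompleteNormedModule _
           (fun m => / s ^ 2 * (c * s ^ 2) ^ m)).
  - intro n. change (norm (heine_term c n)) with (Rabs (heine_term c n)).
    destruct (heine_term_bounds c n Hc). rewrite Rabs_right; lra.
  - apply (ex_series_scal_l (/ s ^ 2) (fun m => (c * s ^ 2) ^ m)).
    eexists. apply is_series_geom. rewrite Rabs_right; lra.
Qed.

Lemma heine_series_contiguous c : 0 < c <= s ^ 2 ->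
  Series (heine_term c) = heine_ratio c * Series (heine_term (c * s ^ 2)).
Proof.
  intro Hc. pose proof sq_s_bounds. pose proof (heine_base_bounds c Hc).
  assert (Hfactor : is_lim_seq (fun m => ((s ^ 2) ^ m - 1) * / (1 - c * s ^ 2))
                      ((0 - 1) * / (1 - c * s ^ 2))).
  { apply (is_lim_seq_scal_r _ _ (0 - 1)), is_lim_seq_minus';
      [apply is_lim_seq_geom; rewrite Rabs_right; lra | apply is_lim_seq_const]. }
  assert (Hdefect : is_lim_seq (heine_defect c) 0).
  { replace (Finite 0) with (Finite ((0 - 1) * / (1 - c * s ^ 2) * 0)) by (f_equal; ring).
    apply is_lim_seq_ext with (fun m => ((s ^ 2) ^ m - 1) * / (1 - c * s ^ 2) * heine_term c m).
    { intro m. unfold heine_defect, Rdiv. ring. }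
    apply is_lim_seq_mult'; [exact Hfactor|].
    apply ex_series_lim_0, ex_series_heine_term. exact Hc. }
  pose proof (is_series_telescoping _ _ Hdefect) as Htele.
  replace (0 - heine_defect c 0) with 0 in Htele by (unfold heine_defect; simpl; field; lra).
  pose proof (Series_correct _ (ex_series_heine_term (c * s ^ 2) ltac:(lra))) as Hnext.
  pose proof (is_series_plus _ _ _ _ (is_series_scal (heine_ratio c) _ _ Hnext) Htele) as Hsum.
  apply is_series_unique. rewrite <- (Rplus_0_r (heine_ratio c * _)).
  eapply is_series_ext; [|exact Hsum].
  intro m. symmetry. apply heine_term_contiguous. lra.
Qed.

Lemma heine_term_0 c : heine_term c 0 = 1.
Proof. unfold heine_term. simpl. field. Qed.

Lemma heine_series_bounds c : 0 < c <= s ^ 2 ->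
  1 <= Series (heine_term c) <= 1 + c / (1 - s ^ 2).
Proof.
  intro Hc. pose proof sq_s_bounds. pose proof (heine_base_bounds c Hc).
  pose proof (ex_series_heine_term c Hc) as Hex.
  rewrite (Series_incr_1 _ Hex), heine_term_0.
  pose proof (proj1 (ex_series_incr_1 _) Hex) as Hex1.
  assert (Hgeom : is_series (fun m => / s ^ 2 * (c * s ^ 2) ^ S m)
                    (/ s ^ 2 * (c * s ^ 2) * / (1 - c * s ^ 2))).
  { assert (Hgeom0 : Rabs (c * s ^ 2) < 1) by (rewrite Rabs_right; lra).
    pose proof (is_series_scal (/ s ^ 2 * (c * s ^ 2)) _ _ (is_series_geom _ Hgeom0)) as G.
    refine (is_series_ext _ _ _ _ G).
    intro m. change (/ s ^ 2 * (c * s ^ 2) * (c * s ^ 2) ^ m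
                     = / s ^ 2 * ((c * s ^ 2) * (c * s ^ 2) ^ m)). ring. }
  assert (Hup : Series (fun m => heine_term c (S m)) <= c / (1 - s ^ 2)).
  { apply Rle_trans with (/ s ^ 2 * (c * s ^ 2) * / (1 - c * s ^ 2)).
    - rewrite <- (is_series_unique _ _ Hgeom).
      apply Series_le; [intro m; apply heine_term_bounds; exact Hc | eexists; exact Hgeom].
    - replace (/ s ^ 2 * (c * s ^ 2)) with c by (field; lra).
      apply Rmult_le_compat_l; [lra|]. apply Rinv_le_contravar; lra. }
  pose proof (Series_nonneg _ Hex1 (fun m => proj1 (heine_term_bounds c (S m) Hc))).
  lra.
Qed.

Lemma is_lim_seq_heine_series :
  is_lim_seq (fun K => Series (heine_term ((s ^ 2) ^ S K))) 1.
Proof.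
  pose proof sq_s_bounds.
  apply is_lim_seq_le_le with (fun _ => 1) (fun K => 1 + (s ^ 2) ^ S K / (1 - s ^ 2)).
  - intro K. apply heine_series_bounds, pow_s2_S_bounds.
  - apply is_lim_seq_const.
  - replace (Finite 1) with (Finite (1 + 0 * / (1 - s ^ 2))) by (f_equal; ring).
    apply is_lim_seq_plus'; [apply is_lim_seq_const|].
    apply (is_lim_seq_scal_r _ _ 0), (is_lim_seq_incr_1 (fun K => (s ^ 2) ^ K)).
    apply is_lim_seq_geom. rewrite Rabs_right; lra.
Qed.

Lemma heine_series_partial_product K :
  Series (heine_term (s ^ 2)) * (1 - s) ^ 2
    * qpoch_partial (s ^ 2) (s ^ 2) K * qpoch_partial (s ^ 2) (s ^ 2) (S K)
  = qpoch_partial s (s ^ 2) (S K) ^ 2 * (1 - s ^ 2) * Series (heine_term ((s ^ 2) ^ S K)).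
Proof.
  pose proof sq_s_bounds.
  induction K as [|K IH].
  { rewrite pow_1.
    change (qpoch_partial ?z (s ^ 2) 1) with (1 * (1 - z * (s ^ 2) ^ 0)).
    change (qpoch_partial ?z (s ^ 2) 0) with 1. ring. }
  set (c := (s ^ 2) ^ S K) in *.
  pose proof (pow_s2_S_bounds K) as Hc. fold c in Hc.
  pose proof (heine_base_bounds c Hc).
  rewrite (heine_series_contiguous c Hc) in IH. unfold heine_ratio in IH.
  replace ((s ^ 2) ^ S (S K)) with (c * s ^ 2) by (unfold c; simpl; ring).
  change (qpoch_partial ?z (s ^ 2) (S (S K)))
    with (qpoch_partial z (s ^ 2) (S K) * (1 - z * (s ^ 2) ^ S K)).
  change (qpoch_partial (s ^ 2) (s ^ 2) (S K))
    with (qpoch_partial (s ^ 2) (s ^ 2) K * (1 - s ^ 2 * (s ^ 2) ^ K)) in *.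
  change (s ^ 2 * (s ^ 2) ^ K) with ((s ^ 2) ^ S K) in *. fold c in IH |- *.
  transitivity (Series (heine_term (s ^ 2)) * (1 - s) ^ 2 * qpoch_partial (s ^ 2) (s ^ 2) K
                * (qpoch_partial (s ^ 2) (s ^ 2) K * (1 - c)) * ((1 - c) * (1 - s ^ 2 * c)));
    [ring|].
  rewrite IH. field. split; lra.
Qed.

Theorem heine_q_gauss_sum :
  (1 - s) ^ 2 * qpoch_inf (s ^ 2) (s ^ 2) ^ 2 * Series (heine_term (s ^ 2))
  = (1 - s ^ 2) * qpoch_inf s (s ^ 2) ^ 2.
Proof.
  pose proof sq_s_bounds.
  destruct (qpoch_inf_spec s (s ^ 2) ltac:(lra) ltac:(lra)) as [Hhalf _].
  destruct (qpoch_inf_spec (s ^ 2) (s ^ 2) ltac:(lra) ltac:(lra)) as [Hfull _].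
  set (F := Series (heine_term (s ^ 2))).
  assert (Hlhs : is_lim_seq
    (fun K => F * (1 - s) ^ 2 * qpoch_partial (s ^ 2) (s ^ 2) K * qpoch_partial (s ^ 2) (s ^ 2) (S K))
    (F * (1 - s) ^ 2 * qpoch_inf (s ^ 2) (s ^ 2) * qpoch_inf (s ^ 2) (s ^ 2))).
  { apply is_lim_seq_mult'; [apply is_lim_seq_mult'; [apply is_lim_seq_const | exact Hfull]|].
    now apply (is_lim_seq_incr_1 (qpoch_partial (s ^ 2) (s ^ 2))). }
  assert (Hrhs : is_lim_seq
    (fun K => F * (1 - s) ^ 2 * qpoch_partial (s ^ 2) (s ^ 2) K * qpoch_partial (s ^ 2) (s ^ 2) (S K))
    (qpoch_inf s (s ^ 2) * qpoch_inf s (s ^ 2) * (1 - s ^ 2) * 1)).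
  { apply is_lim_seq_ext with
      (fun K => qpoch_partial s (s ^ 2) (S K) * qpoch_partial s (s ^ 2) (S K) * (1 - s ^ 2)
                * Series (heine_term ((s ^ 2) ^ S K))).
    { intro K. rewrite heine_series_partial_product. ring. }
    assert (Hhalf1 := proj1 (is_lim_seq_incr_1 (qpoch_partial s (s ^ 2)) _) Hhalf).
    apply is_lim_seq_mult'; [|exact is_lim_seq_heine_series].
    apply is_lim_seq_mult'; [apply is_lim_seq_mult'; assumption | apply is_lim_seq_const]. }
  pose proof (is_lim_seq_unique _ _ Hlhs) as Hlim.
  rewrite (is_lim_seq_unique _ _ Hrhs) in Hlim. apply Rbar_finite_eq in Hlim.
  transitivity (F * (1 - s) ^ 2 * qpoch_inf (s ^ 2) (s ^ 2) * qpoch_inf (s ^ 2) (s ^ 2)); [ring|].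
  rewrite <- Hlim. ring.
Qed.

End HeineSum.

Lemma qnum2_nat q n : 0 < q -> qnum2 q (INR n) = (1 - (q ^ 2) ^ n) / (1 - q ^ 2).
Proof.
  intro Hq. unfold qnum2, qpow.
  replace (2 * INR n) with (INR (2 * n)) by (rewrite mult_INR; reflexivity).
  rewrite Rpower_pow, pow_mult by exact Hq. reflexivity.
Qed.

Lemma qnum2_half_nat q n : 0 < q -> qnum2 q (1 / 2 + INR n) = (1 - q * (q ^ 2) ^ n) / (1 - q ^ 2).
Proof.
  intro Hq. unfold qnum2, qpow.
  replace (2 * (1 / 2 + INR n)) with (INR (S (2 * n))) by (rewrite S_INR, mult_INR; simpl; field).
  rewrite Rpower_pow, <- pow_mult by exact Hq. reflexivity.
Qed.

Lemma qfact2_qpoch_partial q n : 0 < q < 1 ->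
  qfact2 q n = qpoch_partial (q ^ 2) (q ^ 2) n / (1 - q ^ 2) ^ n.
Proof.
  intro Hq. assert (0 < 1 - q ^ 2) by nra.
  induction n as [|n IH]; [simpl; field|].
  change (qfact2 q (S n)) with (qfact2 q n * qnum2 q (INR (S n))).
  rewrite IH, qnum2_nat by lra.
  change ((q ^ 2) ^ S n) with (q ^ 2 * (q ^ 2) ^ n). simpl.
  field. split; [apply pow_nonzero|]; lra.
Qed.

Lemma qhalf_poch_qpoch_partial q n : 0 < q < 1 ->
  qhalf_poch q n = qpoch_partial q (q ^ 2) n / (1 - q ^ 2) ^ n.
Proof.
  intro Hq. assert (0 < 1 - q ^ 2) by nra.
  induction n as [|n IH]; [simpl; field|].
  change (qhalf_poch q (S n)) with (qhalf_poch q n * qnum2 q (1 / 2 + INR n)).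
  rewrite IH, qnum2_half_nat by lra. simpl.
  field. split; [apply pow_nonzero|]; lra.
Qed.

(* The prefactor [q^2 (1+q)^2] is [(1 - q^2)^2 / (1 - 1/q)^2], coming from
   [(1/q; q^2)_(n+1) = (1 - 1/q) (q; q^2)_n]. *)
Lemma term8_heine_term q n : 0 < q < 1 ->
  term8 q n = q ^ 2 * (1 + q) ^ 2 * heine_term q (q ^ 2) (S n).
Proof.
  intro Hq. assert (0 < 1 - q ^ 2) by nra.
  unfold term8, heine_term.
  rewrite qfact2_qpoch_partial, qhalf_poch_qpoch_partial, (qpoch_partial_shift (/ q)) by exact Hq.
  replace (/ q * q ^ 2) with q by (field; lra).
  replace ((q ^ 2 * q ^ 2) ^ S n) with (q ^ (4 * n + 4))
    by (rewrite <- pow_add, <- pow_mult; f_equal; lia).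
  pose proof (qpoch_partial_bounds (q ^ 2) (q ^ 2) (S n) ltac:(nra) ltac:(nra)).
  assert (0 < (1 - q ^ 2) ^ n) by (apply pow_lt; lra).
  change ((1 - q ^ 2) ^ S n) with ((1 - q ^ 2) * (1 - q ^ 2) ^ n).
  field. repeat split; lra.
Qed.

Lemma heine_term_1 q : 0 < q < 1 -> heine_term q (q ^ 2) 1 = q ^ 2 / (1 + q) ^ 2.
Proof. intro Hq. unfold heine_term. simpl. field. repeat split; nra. Qed.

Lemma heine_q_gauss_pi_q q : 0 < q < 1 ->
  Series (heine_term q (q ^ 2)) = (1 + q) ^ 2 * qpow q (1 / 4) / pi_q q.
Proof.
  intro Hq. pose proof (heine_q_gauss_sum q Hq) as Hgauss.
  destruct (qpoch_inf_spec q (q ^ 2) ltac:(lra) ltac:(nra)) as [_ Hhalf].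
  destruct (qpoch_inf_spec (q ^ 2) (q ^ 2) ltac:(nra) ltac:(nra)) as [_ Hfull].
  assert (0 < qpow q (1 / 4)) by (unfold qpow, Rpower; apply exp_pos).
  assert (Hd : 0 < (1 - q) ^ 2 * qpoch_inf (q ^ 2) (q ^ 2) ^ 2)
    by (apply Rmult_lt_0_compat; apply pow_lt; lra).
  apply Rmult_eq_reg_l with ((1 - q) ^ 2 * qpoch_inf (q ^ 2) (q ^ 2) ^ 2); [|lra].
  rewrite Hgauss. unfold pi_q. field. repeat split; nra.
Qed.

Lemma qpow_9_4 q : 0 < q -> qpow q (9 / 4) = q ^ 2 * qpow q (1 / 4).
Proof.
  intro Hq. unfold qpow. replace (9 / 4) with (INR 2 + 1 / 4) by (simpl; field).
  now rewrite Rpower_plus, Rpower_pow.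
Qed.

Theorem mainTheorem8 (q : R) (hq0 : 0 < q) (hq1 : q < 1) :
  exists L : R,
    infinite_sum (fun n => term8 q (S n)) L /\
    q ^ 2 * (1 + q) ^ 2 + q ^ 4 + L = (1 + q) ^ 4 / pi_q q * qpow q (9/4).
Proof.
  assert (Hq : 0 < q < 1) by lra.
  pose proof (ex_series_heine_term q Hq (q ^ 2) ltac:(nra)) as Hex.
  pose proof (proj1 (ex_series_incr_1 _) Hex) as Hex1.
  pose proof (proj1 (ex_series_incr_1 _) Hex1) as Hex2.
  set (tail := Series (fun m => heine_term q (q ^ 2) (S (S m)))).
  exists (q ^ 2 * (1 + q) ^ 2 * tail). split.
  - apply is_series_Reals.
    refine (is_series_ext _ _ _ _ (is_series_scal (q ^ 2 * (1 + q) ^ 2) _ _ (Series_correct _ Hex2))).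
    intro n. symmetry. now apply term8_heine_term.
  - assert (Hsplit : Series (heine_term q (q ^ 2)) = 1 + q ^ 2 / (1 + q) ^ 2 + tail).
    { rewrite (Series_incr_1 _ Hex), (Series_incr_1 _ Hex1), heine_term_0, heine_term_1
        by exact Hq. unfold tail. ring. }
    transitivity (q ^ 2 * (1 + q) ^ 2 * Series (heine_term q (q ^ 2))).
    + rewrite Hsplit. field. lra.
    + rewrite heine_q_gauss_pi_q, qpow_9_4 by assumption. unfold Rdiv. ring.
Qed.
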